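(* Let $p$ be an odd prime and let $(G,H,T)$ be the envelope of a right conjugacy closed loop of order $2p$. Let $K$ be a subgroup with $H\lneq K\lneq G$, $|G:K|=2$ and $|K:H|=p$. Suppose $1\ne H\trianglelefteq K$. Then $|H|=p$ and there is an involution $a\in G\setminus K$ with $K=H\times H^a$. In particular $G\cong C_p\wr C_2$.
   Context: For a finite loop $\mathcal{L}$ with identity $e$: $G=\langle R_a\mid a\in\mathcal L\rangle$ with $R_a\colon x\mapsto xa$, $H$ the stabilizer of $e$ in $G$, $T=\{R_a\}$; $(G,H,T)$ is the envelope; the loop is right conjugacy closed if $T$ is a union of conjugacy classes of $G$. *)

From HB Require Import structures.
From mathcomp Require Import all_boot all_algebra all_fingroup.
Set Implicit Arguments. Unset Strict Implicit. Unset Printing Implicit Defensive.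
Import GRing.Theory.

Local Open Scope group_scope.

(* A finite loop: a finite set L with a binary operation mul and a two-sided
   identity e such that all left and right translations are bijective
   (for a finite carrier, injectivity is equivalent to bijectivity, i.e. to
   unique solvability of a x = b and y a = b). *)
Definition is_loop (L : finType) (mul : L -> L -> L) (e : L) : Prop :=
  [/\ forall x, mul e x = x,
      forall x, mul x e = x,
      forall a, injective (mul a)
    & forall a, injective (fun x => mul x a)].

Definition rtrans (L : finType) (mul : L -> L -> L) : {set {perm L}} :=
  [set s : {perm L} | [exists a : L, [forall x : L, s x == mul x a]]].

Definition rmlt (L : finType) (mul : L -> L -> L) : {set {perm L}} :=
  <<rtrans mul>>.

Definition rinn (L : finType) (mul : L -> L -> L) (e : L) : {set {perm L}} :=
  [set g in rmlt mul | g e == e].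

Definition rcc (L : finType) (mul : L -> L -> L) : Prop :=
  forall t g, t \in rtrans mul -> g \in rmlt mul -> t ^ g \in rtrans mul.

(* The wreath product C_p wr C_2 in its imprimitive permutation action on
   bool * 'Z_p: generated by f : (b,x) |-> (b, x+1 if b else x) and
   the swap s : (b,x) |-> (~~ b, x). *)
Section Wreath.
Variable p : nat.
Definition wr_f (u : bool * 'Z_p) : bool * 'Z_p :=
  (u.1, if u.1 then (u.2 + 1)%R else u.2).
Definition wr_s (u : bool * 'Z_p) : bool * 'Z_p := (~~ u.1, u.2).
Lemma wr_f_inj : injective wr_f.
Proof.
move=> [b x] [c y]; rewrite /wr_f /= => -[<-]; case: b => [|-> //].
by move=> /(congr1 (fun z => z - 1)%R); rewrite !addrK => ->.
Qed.
Lemma wr_s_inj : injective wr_s.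
Proof. by move=> [b x] [c y] [/negb_inj -> ->]. Qed.
Definition wreath_Cp_C2 : {set {perm (bool * 'Z_p)}} :=
  <<[set perm wr_f_inj; perm wr_s_inj]>>.
End Wreath.

From mathcomp Require Import all_boot all_algebra all_fingroup.
From mathcomp Require Import all_solvable.
Set Implicit Arguments. Unset Strict Implicit. Unset Printing Implicit Defensive.
Local Open Scope group_scope.

(* G acts transitively on L with point stabiliser H, so H is core-free in G.
   For b outside the index-2 subgroup K, the intersection of H and H^b is
   normalised by K and by b, hence is a normal subgroup of G inside H, hence
   trivial.  As H and H^b are normal in K, H H^b is a subgroup of K of order
   |H|^2, which divides |K| = p |H|; so |H| = p and K = H x H^b.  Since
   |K| = p^2 is odd, an involution a of G (Cauchy) lies outside K.  Writing
   H = <h>, the points h^i(a e) and a(h^i(a e)) enumerate L, and in these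
   coordinates h and a act as the two generators of C_p wr C_2; as h and a
   generate G, this gives the isomorphism. *)

Section IndexTwo.
Variables (gT : finGroupType) (G K : {group gT}).
Hypotheses (sKG : K \subset G) (iGK : #|G : K| = 2).

Lemma index2_sub (M : {group gT}) b :
  b \in G :\: K -> K \subset M -> b \in M -> G \subset M.
Proof.
move=> GKb sKM Mb; apply/subsetP=> g Gg.
case Kg: (g \in K); first exact: subsetP sKM g Kg.
have : g \in K :* b by rewrite (rcoset_index2 sKG iGK GKb) inE Kg.
by case/rcosetP=> k Kk ->; rewrite groupM // (subsetP sKM).
Qed.

Lemma index2_mulgg b : b \in G -> b * b \in K.
Proof.
move=> Gb; case Kb: (b \in K); first by rewrite groupM.
apply/negPn/negP=> notKbb.
have GKb : b \in G :\: K by rewrite inE Kb.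
have : b * b \in G :\: K.
  by rewrite inE; apply/andP; split; [exact: notKbb | exact: groupM].
by rewrite -(rcoset_index2 sKG iGK GKb) mem_rcoset mulgK Kb.
Qed.

Variables (H : {group gT}) (b : gT).
Hypotheses (nHK : H <| K) (coreH : gcore H G = 1) (Gb : b \in G :\: K).

Lemma index2_normal_conjg : H :^ b <| K.
Proof.
have nKb : b \in 'N(K).
  by rewrite (subsetP (normal_norm (index2_normal sKG iGK))) // (setDP Gb).1.
by rewrite -(normP nKb) normalJ.
Qed.

Lemma index2_TI_conjg : H :&: H :^ b = 1.
Proof.
apply/trivgP; rewrite -coreH gcore_max ?subsetIl //.
apply: (index2_sub Gb); first by rewrite normsI ?normal_norm ?index2_normal_conjg.
have Kbb : b * b \in K := index2_mulgg (setDP Gb).1.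
by apply/normP; rewrite conjIg -conjsgM (normP (subsetP (normal_norm nHK) _ Kbb)) setIC.
Qed.

Lemma index2_join_conjg : H <*> H :^ b = H * H :^ b.
Proof.
by rewrite norm_joinEr // (subset_trans (normal_sub index2_normal_conjg)) ?normal_norm.
Qed.

Variable p : nat.
Hypotheses (p_pr : prime p) (iKH : #|K : H| = p) (ntH : H :!=: 1).

Lemma index2_card : #|H| = p.
Proof.
have sHHbK : H <*> H :^ b \subset K.
  by rewrite join_subG (normal_sub nHK) (normal_sub index2_normal_conjg).
have := cardSg sHHbK; rewrite /= index2_join_conjg TI_cardMg ?index2_TI_conjg // cardJg.
rewrite -(Lagrange (normal_sub nHK)) iKH dvdn_pmul2l ?cardG_gt0 //.
by move/(prime_nt_dvdP p_pr); apply; rewrite -trivg_card1.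
Qed.

Lemma index2_dprod_conjg : H \x H :^ b = K.
Proof.
have nHbK := index2_normal_conjg.
rewrite dprodE ?index2_TI_conjg //; last first.
  rewrite centsC; apply/commG1P/trivgP; rewrite -index2_TI_conjg commg_subI //.
    by rewrite subsetI subxx (subset_trans (normal_sub nHK)) ?normal_norm.
  by rewrite subsetI subxx (subset_trans (normal_sub nHbK)) ?normal_norm.
apply/eqP; rewrite eqEcard mul_subG ?normal_sub //=.
rewrite TI_cardMg ?index2_TI_conjg // cardJg index2_card.
by rewrite -(Lagrange (normal_sub nHK)) iKH index2_card.
Qed.

End IndexTwo.

Lemma gcore_astab1_trans (T : finType) (G : {group {perm T}}) x :
  [transitive G, on [set: T] | 'P] -> gcore 'C_G[x | 'P] G = 1.
Proof.
move=> trG; apply/trivgP.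
have sCC : gcore 'C_G[x | 'P] G \subset gcore 'C[x | 'P] G.
  by rewrite gcore_max ?gcore_norm // (subset_trans (gcore_sub _ _)) ?subsetIr.
apply: subset_trans sCC _; rewrite -(astab_trans_gcore trG (in_setT x)).
by have := perm_faithful [set: {perm T}]; rewrite /faithful setTI.
Qed.

Section PermTransport.
Variables (X Y : finType) (psi : X -> Y) (phi : Y -> X).
Hypotheses (psiK : cancel psi phi) (phiK : cancel phi psi).

Definition transport_fun (g : {perm Y}) x := phi (g (psi x)).

Lemma transport_fun_inj g : injective (transport_fun g).
Proof. by move=> x y /(can_inj phiK)/perm_inj/(can_inj psiK). Qed.

Definition perm_transport g := perm (@transport_fun_inj g).

Lemma perm_transportM :
  {in [set: {perm Y}] &, {morph perm_transport : g h / g * h}}.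
Proof.
by move=> g h _ _; apply/permP=> x; rewrite permM !permE /transport_fun permM phiK.
Qed.

Canonical perm_transport_morphism := Morphism perm_transportM.

Lemma injm_perm_transport : 'injm perm_transport.
Proof.
apply/injmP=> g h _ _ /permP eq_gh; apply/permP=> y.
by have := eq_gh (phi y); rewrite !permE /transport_fun phiK => /(can_inj phiK).
Qed.

Lemma perm_transportE (g : {perm Y}) (s : {perm X}) :
  (forall x, psi (s x) = g (psi x)) -> perm_transport g = s.
Proof. by move=> gs; apply/permP=> x; rewrite permE /transport_fun -gs psiK. Qed.

Lemma isog_perm_transport (A : {set {perm Y}}) : <<A>> \isog <<perm_transport @: A>>.
Proof.
rewrite -morphimEsub ?subsetT // -morphim_gen ?subsetT //.
exact: sub_isog (subsetT _) injm_perm_transport.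
Qed.

End PermTransport.

Lemma expg_Zp_inj (gT : finGroupType) (x : gT) p :
  1 < p -> #[x] = p -> injective (fun i : 'Z_p => x ^+ i).
Proof.
move=> p_gt1 ox i j /eqP; rewrite eq_expg_mod_order ox.
have ltp (k : 'Z_p) : k < p by rewrite -[p in _ < p](Zp_cast p_gt1) ltn_ord.
by rewrite !modn_small ?ltp // => /eqP/val_inj.
Qed.

Lemma expg_Zp_addr1 (gT : finGroupType) (x : gT) p (i : 'Z_p) :
  1 < p -> #[x] = p -> x ^+ (i + 1)%R = x ^+ i * x.
Proof.
move=> p_gt1 ox; rewrite add_Zp_1 -expgSr -(expg_mod_order x i.+1) ox.
by congr (x ^+ (_ %% _)); apply: Zp_cast.
Qed.

Section WreathModel.
Variables (T : finType) (e : T) (p : nat) (G K : {group {perm T}}) (h a : {perm T}).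
Let H := 'C_G[e | 'P].
Hypotheses (p_gt1 : 1 < p) (cardT : #|T| = (2 * p)%N).
Hypotheses (sKG : K \subset G) (iGK : #|G : K| = 2).
Hypotheses (defH : H = <[h]>) (oh : #[h] = p).
Hypotheses (GKa : a \in G :\: K) (a2 : a * a = 1) (dprodK : H \x H :^ a = K).

Let Hh : h \in H. Proof. by rewrite defH cycle_id. Qed.
Let Gh : h \in G. Proof. by case/setIP: Hh. Qed.
Let he : h e = e. Proof. by case/setIP: Hh => _ /astab1P. Qed.
Let Ga : a \in G. Proof. by case/setDP: GKa. Qed.
Let notKa : a \notin K. Proof. by case/setDP: GKa. Qed.
Let invga : a^-1 = a. Proof. by apply/eqP; rewrite eq_invg_mul a2. Qed.
Let TI_H_Ha : H :&: H :^ a = 1. Proof. by case/dprodP: dprodK. Qed.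
Let mulH_Ha : H * H :^ a = K. Proof. by case/dprodP: dprodK. Qed.
Let cHa_H : H :^ a \subset 'C(H). Proof. by case/dprodP: dprodK. Qed.
Let sHK : H \subset K. Proof. by rewrite -mulH_Ha mulG_subl. Qed.
Let sHaK : H :^ a \subset K. Proof. by rewrite -mulH_Ha mulG_subr. Qed.

(* The point (true, i) of the model is h^i (a e) and (false, i) is
   a (h^i (a e)); recall that (g * g') x = g' (g x). *)
Definition wreath_coord (u : bool * 'Z_p) : {perm T} :=
  a * h ^+ u.2 * (if u.1 then 1 else a).

Definition wreath_point u := wreath_coord u e.

Lemma wreath_coord_in u : wreath_coord u \in G.
Proof. by rewrite !groupM ?groupX //; case: u.1. Qed.

Lemma wreath_coord_divE b c (i j : 'Z_p) :
  wreath_coord (b, i) * (wreath_coord (c, j))^-1 =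
  a * h ^+ i * (if b == c then 1 else a) * (h ^+ j)^-1 * a.
Proof.
case: b; case: c; rewrite /wreath_coord /= !invMg invga ?invg1 ?mulg1 ?mul1g;
  by rewrite !mulgA // -(mulgA _ a a) a2 mulg1.
Qed.

Lemma wreath_coord_stab u v : wreath_coord u * (wreath_coord v)^-1 \in H -> u = v.
Proof.
case: u v => [b i] [c j]; rewrite wreath_coord_divE; case: eqP => [<- | _] Hx.
  congr (_, _); apply: (expg_Zp_inj p_gt1 oh).
  have : h ^+ i * (h ^+ j)^-1 \in H :&: H :^ a.
    rewrite inE groupM ?groupV ?groupX //= mem_conjg invga conjgE invga !mulgA.
    by rewrite mulg1 in Hx.
  by rewrite TI_H_Ha inE -eq_mulgV1 => /eqP.
(* For b != c the quotient lies in the coset K a, which misses H. *)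
have Kc : (h ^+ i) ^ a * (h ^+ j)^-1 \in K.
  have Ka_hi : (h ^+ i) ^ a \in K by rewrite (subsetP sHaK) // memJ_conjg groupX.
  have K_hj : h ^+ j \in K by rewrite (subsetP sHK) // groupX.
  by rewrite groupM ?groupV.
have := subsetP sHK _ Hx; rewrite conjgE invga !mulgA in Kc.
by rewrite (groupMl _ Kc) (negPf notKa).
Qed.

Lemma wreath_point_inj : injective wreath_point.
Proof.
move=> u v eq_uv; apply: wreath_coord_stab.
rewrite inE groupM ?groupV ?wreath_coord_in //=.
by apply/astab1P; rewrite /= apermE permM -/(wreath_point u) eq_uv permK.
Qed.

Lemma wreath_point_bij : bijective wreath_point.
Proof.
apply: inj_card_bij wreath_point_inj _.
by rewrite cardT card_prod card_bool card_ord Zp_cast.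
Qed.

Lemma wreath_point_f u : wreath_point (wr_f u) = h (wreath_point u).
Proof.
case: u => [[] i]; rewrite /wreath_point /wreath_coord /= -permM.
  by rewrite !mulg1 (expg_Zp_addr1 i p_gt1 oh) mulgA.
have : (h ^+ i) ^ a \in 'C(H) by rewrite (subsetP cHa_H) // memJ_conjg groupX.
move/centP/(_ h Hh) => cha.
by rewrite conjgE invga mulgA in cha; rewrite cha [RHS]permM he.
Qed.

Lemma wreath_point_s u : wreath_point (wr_s u) = a (wreath_point u).
Proof.
case: u => [[] i]; rewrite /wreath_point /wreath_coord /= -permM mulg1 //.
by rewrite -mulgA a2 mulg1.
Qed.

Lemma wreath_gens : G :=: <<[set h; a]>>.
Proof.
have hM : h \in <<[set h; a]>> by rewrite mem_gen // !inE eqxx.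
have aM : a \in <<[set h; a]>> by rewrite mem_gen // !inE eqxx orbT.
apply/eqP; rewrite eqEsubset gen_subG subUset !sub1set Gh Ga !andbT.
apply: (index2_sub sKG iGK GKa _ aM).
by rewrite -mulH_Ha defH -cycleJ mul_subG ?cycle_subG ?groupJ.
Qed.

Lemma isog_wreath : G \isog wreath_Cp_C2 p.
Proof.
have [phi psiK phiK] := wreath_point_bij.
rewrite wreath_gens; have := isog_perm_transport psiK phiK [set h; a].
rewrite imsetU1 imset_set1 (perm_transportE psiK phiK (s := perm (@wr_f_inj p))).
  rewrite (perm_transportE psiK phiK (s := perm (@wr_s_inj p))) //.
  by move=> u; rewrite permE wreath_point_s.
by move=> u; rewrite permE wreath_point_f.
Qed.

End WreathModel.

Lemma rmlt_transitive (L : finType) (mul : L -> L -> L) (e : L) :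
  is_loop mul e -> [transitive rmlt mul, on [set: L] | 'P].
Proof.
case=> mul1 _ _ mulr_inj; apply/imsetP; exists e; rewrite ?inE //.
apply/esym/setP=> x; rewrite in_setT; apply/orbitP.
exists (perm (mulr_inj x)); last by rewrite /= apermE permE mul1.
apply: mem_gen; rewrite inE; apply/existsP; exists x.
by apply/forallP=> y; rewrite permE.
Qed.

Lemma rinn_astab1 (L : finType) (mul : L -> L -> L) (e : L) :
  rinn mul e = 'C_(rmlt mul)[e | 'P].
Proof. by apply/setP=> g; rewrite !inE sub1set inE /= apermE. Qed.

Theorem corollary5p4 (p : nat) (L : finType) (mul : L -> L -> L) (e : L)
  (K : {group {perm L}}) :
  prime p -> odd p ->
  is_loop mul e -> rcc mul -> #|L| = (2 * p)%N ->
  rinn mul e \proper K -> K \proper rmlt mul ->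
  #|rmlt mul : K| = 2 -> #|K : rinn mul e| = p ->
  rinn mul e != 1 -> rinn mul e <| K ->
  #|rinn mul e| = p /\
  (exists2 a, a \in rmlt mul :\: K &
     #[a] = 2 /\ rinn mul e \x (rinn mul e :^ a) = K) /\
  rmlt mul \isog wreath_Cp_C2 p.
Proof.
move=> p_pr p_odd loop _ cardL pHK pKG iGK iKH ntH nHK.
rewrite rinn_astab1 in pHK iKH ntH nHK *.
set H := 'C_(rmlt mul)[e | 'P] in pHK iKH ntH nHK *.
have sHK := proper_sub pHK; have sKG := proper_sub pKG.
have coreH : gcore H (rmlt mul) = 1 := gcore_astab1_trans e (rmlt_transitive loop).
have [_ [b Gb notKb]] := properP pKG.
have GKb : b \in rmlt mul :\: K by rewrite inE notKb.
have cardH : #|H| = p := index2_card sKG iGK nHK coreH GKb p_pr iKH ntH.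
have [a Ga oa] : {a | a \in rmlt mul & #[a] = 2}.
  by apply: Cauchy; rewrite // -(Lagrange sKG) iGK dvdn_mull.
have notKa : a \notin K.
  apply: contraL p_odd => /order_dvdG.
  by rewrite oa -(Lagrange sHK) iKH cardH dvdn2 oddM andbb.
have GKa : a \in rmlt mul :\: K by rewrite inE notKa.
have dprodK := index2_dprod_conjg sKG iGK nHK coreH GKa p_pr iKH ntH.
have [h defH] : exists h, H = <[h]> by apply/cyclicP/prime_cyclic; rewrite cardH.
have oh : #[h] = p by rewrite -cardH defH.
have a2 : a * a = 1 by rewrite -expg2 -oa expg_order.
split=> //; split; first by exists a.
exact: isog_wreath (prime_gt1 p_pr) cardL sKG iGK defH oh GKa a2 dprodK.
Qed.
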